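(* In the Popularity Adjusted Block Model described in the context, suppose $\operatorname{rank}(\boldsymbol\Theta)=K^2$, and let $\boldsymbol\Xi=(\xi_{iu})\in\mathbb R^{n\times K^2}$ be a matrix whose columns are orthonormal eigenvectors of $\boldsymbol\Theta$ corresponding to its $K^2$ nonzero eigenvalues. For $k\in[K]$ let $\boldsymbol\Xi^{(k)}=(\xi_{iu})_{i:\boldsymbol c^\ast(i)=k,\,u\in[K^2]}$ and $\boldsymbol\Lambda^{(k,\cdot)}=(\lambda_{il})_{i:\boldsymbol c^\ast(i)=k,\,l\in[K]}$. Then for each $k\in[K]$, $$\boldsymbol\Xi^{(k)}=\boldsymbol\Lambda^{(k,\cdot)}\boldsymbol Z_k,$$ where $\boldsymbol Z_k\in\mathbb R^{K\times K^2}$ satisfies $\boldsymbol Z_k\boldsymbol Z_l^\top=\boldsymbol 0_{K\times K}$ for each $l\ne k$ and $\boldsymbol Z_k\boldsymbol Z_k^\top=(\boldsymbol\Lambda^{(k,\cdot)\top}\boldsymbol\Lambda^{(k,\cdot)})^{-1}$.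
   Context: Notation: $[m]=\{1,\dots,m\}$. Popularity Adjusted Block Model: integers $n$, $K\ge2$, a community label vector $\boldsymbol c^\ast\in[K]^n$, a popularity matrix $\boldsymbol\Lambda=(\lambda_{ik})\in[0,1]^{n\times K}$. The edge probability matrix is $\boldsymbol\Theta=(\theta_{ij})_{n\times n}$ with $\theta_{ij}=\lambda_{i\boldsymbol c^\ast(j)}\lambda_{j\boldsymbol c^\ast(i)}$ for all $i,j\in[n]$ (a symmetric matrix). Submatrices indexed by ''$i:\boldsymbol c^\ast(i)=k$'' keep the rows $i$ with $\boldsymbol c^\ast(i)=k$ in increasing order of $i$. *)

From HB Require Import structures.
From mathcomp Require Import all_boot all_order all_algebra.
From mathcomp Require Import reals.
Set Implicit Arguments. Unset Strict Implicit. Unset Printing Implicit Defensive.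
Import Order.TTheory GRing.Theory Num.Theory.
Local Open Scope ring_scope.

Definition comm {n K : nat} (c : 'I_n -> 'I_K) (k : 'I_K) : {set 'I_n} :=
  [set i | c i == k].

(* The r-th node (in increasing order of index) of community k. *)
Definition comm_row {n K : nat} (c : 'I_n -> 'I_K) (k : 'I_K)
  (r : 'I_#|comm c k|) : 'I_n := enum_val r.

Definition comm_sub {R : Type} {n K m : nat} (c : 'I_n -> 'I_K) (k : 'I_K)
  (A : 'M[R]_(n, m)) : 'M[R]_(#|comm c k|, m) :=
  rowsub (@comm_row n K c k) A.

Definition pabm_Theta {R : pzRingType} {n K : nat} (c : 'I_n -> 'I_K)
  (Lam : 'M[R]_(n, K)) : 'M[R]_n :=
  \matrix_(i, j) (Lam i (c j) * Lam j (c i)).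

From HB Require Import structures.
From mathcomp Require Import all_boot all_order all_algebra.
From mathcomp Require Import reals.
Set Implicit Arguments. Unset Strict Implicit. Unset Printing Implicit Defensive.
Import Order.TTheory GRing.Theory Num.Theory.
Local Open Scope ring_scope.

(* Theta = B C^T, where B_{i,(k,l)} = [c i = k] lambda_{il} and
   C_{j,(k,l)} = [c j = l] lambda_{jk}.  Eigenvectors with nonzero eigenvalues
   lie in the range of Theta, so Xi = B W for a square W.  Orthonormality
   gives W^T (B^T B) W = I, hence (B^T B)(W W^T) = I.  Since B^T B is block
   diagonal with blocks Lambda^(k)T Lambda^(k), the k-th block row of W is the
   required Z_k, and the rows of Xi = B W in community k are Lambda^(k) Z_k. *)

Lemma mxvec_index_eq m n (i i' : 'I_m) (j j' : 'I_n) :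
  (mxvec_index i j == mxvec_index i' j') = (i == i') && (j == j').
Proof.
by rewrite /mxvec_index (inj_eq (@cast_ord_inj _ _ _)) (inj_eq enum_rank_inj).
Qed.

Lemma sum_mxvec_index (V : nmodType) m n (F : 'I_(m * n) -> V) :
  \sum_(p < m * n) F p = \sum_(i < m) \sum_(j < n) F (mxvec_index i j).
Proof.
rewrite (reindex _ (curry_mxvec_bij _ _)) /= pair_bigA /=.
by apply: eq_bigr => -[].
Qed.

Lemma sum_indicator (R : pzSemiRingType) (I : finType) (a : I) (F : I -> R) :
  \sum_i (a == i)%:R * F i = F a.
Proof.
rewrite (bigD1 a) //= eqxx mul1r big1 ?addr0 // => i /negbTE.
by rewrite eq_sym => ->; rewrite mul0r.
Qed.

Section BlockMatrices.
Variables (R : pzRingType) (m n : nat).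

Definition blocksel (k : 'I_m) : 'M[R]_(n, m * n) :=
  rowsub (mxvec_index k) 1%:M.

Definition blockdiag_mx (G : 'I_m -> 'M[R]_n) : 'M[R]_(m * n) :=
  \sum_k (blocksel k)^T *m G k *m blocksel k.

Lemma blocksel_mul_tr (k l : 'I_m) :
  blocksel k *m (blocksel l)^T = if k == l then 1%:M else 0.
Proof.
rewrite -rowsubE; apply/matrixP => a b; rewrite !mxE eq_sym mxvec_index_eq.
by case: (k == l); rewrite !mxE.
Qed.

Lemma blocksel_mul_blockdiag (G : 'I_m -> 'M[R]_n) k :
  blocksel k *m blockdiag_mx G = G k *m blocksel k.
Proof.
rewrite mulmx_sumr (bigD1 k) //= !mulmxA blocksel_mul_tr eqxx mul1mx.
rewrite big1 ?addr0 // => l /negbTE.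
by rewrite eq_sym !mulmxA blocksel_mul_tr => ->; rewrite !mul0mx.
Qed.

Lemma blockdiag_mx_inverse (G : 'I_m -> 'M[R]_n) (M : 'M[R]_(m * n)) :
  blockdiag_mx G *m M = 1%:M -> forall k l,
  G k *m (blocksel k *m M *m (blocksel l)^T) = if k == l then 1%:M else 0.
Proof.
move=> GM k l; rewrite !mulmxA -blocksel_mul_blockdiag -(mulmxA _ _ M) GM.
by rewrite mulmx1 blocksel_mul_tr.
Qed.

End BlockMatrices.

Arguments blocksel {R m} n k.
Arguments blockdiag_mx {R m n} G.

Lemma comm_sub_mul (R : pzRingType) n K m p (c : 'I_n -> 'I_K) k
    (A : 'M[R]_(n, m)) (B : 'M[R]_(m, p)) :
  comm_sub c k (A *m B) = comm_sub c k A *m B.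
Proof. exact/esym/mul_rowsub_mx. Qed.

Lemma gram_comm_sub (R : pzRingType) n K m (c : 'I_n -> 'I_K)
    (A : 'M[R]_(n, m)) :
  A^T *m A = \sum_k (comm_sub c k A)^T *m comm_sub c k A.
Proof.
apply/matrixP => a b; rewrite summxE !mxE (partition_big c xpredT) //=.
apply: eq_bigr => k _; rewrite mxE.
rewrite (eq_bigl (fun i => i \in comm c k)); last by move=> i; rewrite inE.
by rewrite big_enum_val; apply: eq_bigr => r _; rewrite !mxE.
Qed.

Lemma eigenvectors_factor (F : fieldType) n m p (B C : 'M[F]_(n, m))
    (X : 'M[F]_(n, p)) (d : 'rV[F]_p) :
  (forall u, d 0 u != 0) -> B *m C^T *m X = X *m diag_mx d ->
  exists W, X = B *m W.
Proof.
move=> d_neq0 eigX.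
have unit_d : diag_mx d \in unitmx.
  by rewrite unitmxE det_diag unitfE; apply/prodf_neq0 => u _.
exists (C^T *m X *m invmx (diag_mx d)).
by rewrite -[LHS](mulmxK unit_d) -eigX !mulmxA.
Qed.

Lemma orthonormal_factor_gram (R : comUnitRingType) n m
    (X B : 'M[R]_(n, m)) (W : 'M[R]_m) :
  X = B *m W -> X^T *m X = 1%:M -> B^T *m B *m (W *m W^T) = 1%:M.
Proof.
move=> -> orthoX; rewrite mulmxA; apply: mulmx1C.
by rewrite -orthoX trmx_mul !mulmxA.
Qed.

Section PABMFactorization.
Variables (R : comPzRingType) (n K : nat).
Variables (c : 'I_n -> 'I_K) (Lam : 'M[R]_(n, K)).

Definition pabm_left : 'M[R]_(n, K * K) :=
  \matrix_i mxvec (\matrix_(k, l) ((c i == k)%:R * Lam i l)).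

Definition pabm_right : 'M[R]_(n, K * K) :=
  \matrix_i mxvec (\matrix_(k, l) ((c i == l)%:R * Lam i k)).

Lemma pabm_leftE i k l :
  pabm_left i (mxvec_index k l) = (c i == k)%:R * Lam i l.
Proof. by rewrite mxE mxvecE mxE. Qed.

Lemma pabm_rightE i k l :
  pabm_right i (mxvec_index k l) = (c i == l)%:R * Lam i k.
Proof. by rewrite mxE mxvecE mxE. Qed.

Lemma pabm_Theta_factor : pabm_Theta c Lam = pabm_left *m pabm_right^T.
Proof.
apply/matrixP => i j; rewrite !mxE sum_mxvec_index.
under eq_bigr => k _ do under eq_bigr => l _ do
  rewrite [pabm_right^T _ _]mxE pabm_leftE pabm_rightE mulrACA -mulrA.
under eq_bigr => k _ do rewrite -big_distrr /=.
by rewrite !sum_indicator.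
Qed.

Lemma comm_sub_pabm_left k :
  comm_sub c k pabm_left = comm_sub c k Lam *m blocksel K k.
Proof.
apply/matrixP => r p; case/mxvec_indexP: p => k' l.
rewrite [LHS]mxE pabm_leftE mxE.
have := enum_valP r; rewrite inE => /eqP ->.
under eq_bigr => j _ do rewrite !mxE mxvec_index_eq.
have [_|_] := eqVneq k k'; last by rewrite mul0r big1 // => j _; rewrite mulr0.
under eq_bigr => j _ do rewrite eq_sym mulrC.
by rewrite mul1r sum_indicator.
Qed.

Lemma gram_pabm_left :
  pabm_left^T *m pabm_left =
  blockdiag_mx (fun k => (comm_sub c k Lam)^T *m comm_sub c k Lam).
Proof.
rewrite (gram_comm_sub c); apply: eq_bigr => k _.
by rewrite comm_sub_pabm_left trmx_mul !mulmxA.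
Qed.

End PABMFactorization.

Theorem proposition1 (R : realType) (n K : nat) (hK : (2 <= K)%N)
  (c : 'I_n -> 'I_K) (Lam : 'M[R]_(n, K))
  (hLam : forall i l, 0 <= Lam i l <= 1)
  (hrank : \rank (pabm_Theta c Lam) = (K * K)%N)
  (Xi : 'M[R]_(n, K * K)) (d : 'rV[R]_(K * K))
  (hortho : Xi^T *m Xi = 1%:M)
  (heig : pabm_Theta c Lam *m Xi = Xi *m diag_mx d)
  (hd : forall u, d 0 u != 0) :
  exists Z : 'I_K -> 'M[R]_(K, K * K),
    forall k : 'I_K,
      [/\ comm_sub c k Xi = comm_sub c k Lam *m Z k,
          (forall l : 'I_K, l != k -> Z k *m (Z l)^T = 0),
          (comm_sub c k Lam)^T *m comm_sub c k Lam \in unitmx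
        & Z k *m (Z k)^T = invmx ((comm_sub c k Lam)^T *m comm_sub c k Lam)].
Proof.
rewrite pabm_Theta_factor in heig.
have [W Xi_eq] := eigenvectors_factor hd heig.
have := orthonormal_factor_gram Xi_eq hortho.
rewrite gram_pabm_left => /blockdiag_mx_inverse blocks.
pose G k := (comm_sub c k Lam)^T *m comm_sub c k Lam.
have unitG k : G k \in unitmx.
  by have := blocks k k; rewrite eqxx => /mulmx1_unit[].
pose Z k := blocksel K k *m W.
have Z_mul_tr k l :
    Z k *m (Z l)^T = invmx (G k) *m (if k == l then 1%:M else 0).
  by rewrite -(blocks k l) mulKmx ?unitG // trmx_mul !mulmxA.
exists Z => k; split => [|l /negbTE neq_lk||].
- by rewrite Xi_eq comm_sub_mul comm_sub_pabm_left mulmxA.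
- by rewrite Z_mul_tr eq_sym neq_lk mulmx0.
- exact: unitG.
- by rewrite Z_mul_tr eqxx mulmx1.
Qed.
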